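(* For every $h\ge1$, the reduction map $r_\ell:\mathrm{Irr}(T_h,\overline{\mathbb Q}_\ell)\to\mathrm{Irr}(T_h,\overline{\mathbb F}_\ell)$ is a $\mathrm{Gal}(L/K)$-equivariant surjection all of whose fibers have exactly $\ell^m$ elements, where $m=v_\ell(q^n-1)$.
   Context: $K$ is a non-archimedean local field with residue field $\mathbb F_q$ of characteristic $p$; $L/K$ is the unramified extension of degree $n$, with ring of integers $\mathcal O_L$ and maximal ideal $\mathfrak p_L$; $\ell\ne p$ prime. $T_h=\mathcal O_L^\times/(1+\mathfrak p_L^h)$, a finite abelian group with $\mathrm{Gal}(L/K)$-action. $\mathrm{Irr}(T_h,\Lambda)$ is the set of characters $T_h\to\Lambda^\times$, with $\mathrm{Gal}(L/K)$ acting by precomposition; $r_\ell$ postcomposes a character (with values in roots of unity of $\overline{\mathbb Z}_\ell$) with $\overline{\mathbb Z}_\ell\to\overline{\mathbb F}_\ell$. *)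

From HB Require Import structures.
From mathcomp Require Import all_boot all_order all_algebra all_field.
Set Implicit Arguments. Unset Strict Implicit. Unset Printing Implicit Defensive.
Import Order.TTheory GRing.Theory Num.Theory.
Local Open Scope ring_scope.

(* Normalized discrete valuation on a field F (value at 0 is irrelevant). *)
Definition is_discrete_valuation (F : fieldType) (v : F -> int) : Prop :=
  [/\ forall x y : F, x != 0 -> y != 0 -> v (x * y) = v x + v y,
      forall x y : F, x != 0 -> y != 0 -> x + y != 0 ->
        (v x <= v (x + y)) || (v y <= v (x + y))
    & forall z : int, exists2 x : F, x != 0 & v x = z].

(* vpow v k = the fractional ideal p^k = {x | x = 0 or v x >= k};
   vpow v 0 is the valuation ring O, vpow v 1 its maximal ideal p. *)
Definition vpow (F : fieldType) (v : F -> int) (k : int) (x : F) : bool :=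
  (x == 0) || (k <= v x).

Definition vunit (F : fieldType) (v : F -> int) (x : F) : bool :=
  (x != 0) && (v x == 0).

Definition v_complete (F : fieldType) (v : F -> int) : Prop :=
  forall u : nat -> F,
    (forall N : int, exists M : nat, forall i j : nat,
        (M <= i)%N -> (M <= j)%N -> vpow v N (u i - u j)) ->
    exists l : F, forall N : int, exists M : nat, forall i : nat,
        (M <= i)%N -> vpow v N (u i - l).

Definition residue_card (F : fieldType) (v : F -> int) (k : nat) : Prop :=
  exists s : seq F,
    [/\ size s = k, all (vpow v 0) s,
        forall i j : nat, (i < k)%N -> (j < k)%N ->
          vpow v 1 (nth 0 s i - nth 0 s j) -> i = j
      & forall x : F, vpow v 0 x ->
          exists2 i : nat, (i < k)%N & vpow v 1 (x - nth 0 s i)].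

(* A character of T_h = O_L^x / (1 + p_L^h) with values in Lam, represented
   as a function on L that is multiplicative on O_L^x and trivial on
   1 + p_L^h; two such functions define the same character of T_h iff
   they agree on O_L^x.  (Values are automatically in Lam^x.) *)
Definition Th_char (L : fieldType) (vL : L -> int) (h : nat)
    (Lam : fieldType) (chi : L -> Lam) : Prop :=
  (forall x y : L, vunit vL x -> vunit vL y -> chi (x * y) = chi x * chi y) /\
  (forall x : L, vunit vL x -> vpow vL (h%:Z) (x - 1) -> chi x = 1).

(* An element of Gal(L/K): a K-algebra (ring) endomorphism of L
   (automatically an automorphism since [L:K] is finite). *)
Definition gal_elt (K : fieldType) (L : fieldExtType K) (s : L -> L) : Prop :=
  [/\ forall x y : L, s (x + y) = s x + s y,
      forall x y : L, s (x * y) = s x * s y,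
      s 1 = 1
    & forall c : K, s (c%:A) = c%:A].

Definition valuation_ring (Lam : fieldType) (O : Lam -> bool) : Prop :=
  [/\ O 1,
      forall x y, O x -> O y -> O (x - y),
      forall x y, O x -> O y -> O (x * y)
    & forall x, x != 0 -> O x || O (x^-1)].

(* red : O -> Lam1 is a ring morphism from the valuation ring O of Lam0
   whose kernel is the maximal ideal of O (abstracting Zbar_l -> Fbar_l). *)
Definition reduction_map (Lam0 Lam1 : fieldType) (O : Lam0 -> bool)
    (red : Lam0 -> Lam1) : Prop :=
  [/\ valuation_ring O,
      red 1 = 1,
      forall x y, O x -> O y -> red (x + y) = red x + red y,
      forall x y, O x -> O y -> red (x * y) = red x * red y
    & forall x, O x -> (red x == 0) = ((x == 0) || ~~ O (x^-1))].

(* Let N = (q^n - 1) p^(h-1).  For a unit x of O_L, x^(q^n - 1) lies in 1 + p_L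
   because the residue field has q^n elements, and raising to the p-th power
   moves 1 + p_L^i into 1 + p_L^(i+1); hence x^N is in 1 + p_L^h and every
   character of T_h takes values in the N-th roots of unity.  Write
   N = N' l^m with l not dividing N'.  Reduction is injective on N'-th roots
   of unity (for such a root z <> 1 the sum of the z^i vanishes, while its
   reduction would be N' <> 0), so a character psi over Fbar_l, whose values
   are N'-th roots of unity, has a canonical multiplicative lift.  Two lifts
   of psi differ by a character e with values in l-power roots of unity; e is
   trivial on the p-group 1 + p_L, so it factors through the cyclic group
   F_(q^n)^x and is determined by e(g) for a generator g, an l^m-th root of
   unity.  This gives exactly l^m lifts. *)

From HB Require Import structures.
From mathcomp Require Import all_boot all_order all_algebra all_field.
From mathcomp Require Import cyclic zify.
Set Implicit Arguments. Unset Strict Implicit. Unset Printing Implicit Defensive.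
Import Order.TTheory GRing.Theory Num.Theory.
Local Open Scope ring_scope.

Notation vcong v x y := (vpow v 1 (x - y)).

Section Valuation.
Variables (L : fieldType) (v : L -> int).
Hypothesis Hv : is_discrete_valuation v.

Let valM x y : x != 0 -> y != 0 -> v (x * y) = v x + v y.
Proof. by case: Hv => vM _ _; apply: vM. Qed.

Let val_addr x y : x != 0 -> y != 0 -> x + y != 0 ->
  (v x <= v (x + y)) || (v y <= v (x + y)).
Proof. by case: Hv => _ vD _; apply: vD. Qed.

Lemma val1 : v 1 = 0.
Proof.
have := valM (oner_neq0 L) (oner_neq0 L); rewrite mulr1 => e.
by apply: (addrI (v 1)); rewrite addr0 -e.
Qed.

Lemma valN x : x != 0 -> v (- x) = v x.
Proof.
have N1_neq0 : (-1 : L) != 0 by rewrite oppr_eq0 oner_neq0.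
have valN1 : v (-1) = 0 by have := valM N1_neq0 N1_neq0; rewrite mulrNN mulr1 val1; lia.
by move=> x0; rewrite -mulN1r valM // valN1 add0r.
Qed.

Lemma valV x : x != 0 -> v x^-1 = - v x.
Proof. by move=> x0; have := valM x0 (invr_neq0 x0); rewrite mulfV // val1; lia. Qed.

Lemma vpow0 k : vpow v k 0.
Proof. by rewrite /vpow eqxx. Qed.

Lemma vpowD k x y : vpow v k x -> vpow v k y -> vpow v k (x + y).
Proof.
have [-> _|x0] := eqVneq x 0; first by rewrite add0r.
have [-> ? _|y0] := eqVneq y 0; first by rewrite addr0.
rewrite /vpow (negPf x0) (negPf y0) /= => kx ky.
have [//|s0 /=] := eqVneq (x + y) 0.
by case/orP: (val_addr x0 y0 s0) => [/(le_trans kx) | /(le_trans ky)].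
Qed.

Lemma vpowN k x : vpow v k x -> vpow v k (- x).
Proof. by rewrite /vpow oppr_eq0; have [//|x0] := eqVneq x 0; rewrite valN. Qed.

Lemma vpowM a b x y : vpow v a x -> vpow v b y -> vpow v (a + b) (x * y).
Proof.
rewrite /vpow mulf_eq0; have [//|x0] := eqVneq x 0; have [//|y0] := eqVneq y 0.
by rewrite /= valM //; apply: lerD.
Qed.

Lemma vpowW a b x : a <= b -> vpow v b x -> vpow v a x.
Proof. by rewrite /vpow => ab /orP[->//|bx]; rewrite (le_trans ab bx) orbT. Qed.

Lemma vpow01 : vpow v 0 1.
Proof. by rewrite /vpow val1 lexx orbT. Qed.

Lemma vpow0_nat k : vpow v 0 k%:R.
Proof. by elim: k => [|k IHk]; rewrite ?vpow0 // -addn1 natrD vpowD ?vpow01. Qed.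

Lemma vpow0Ml a x y : vpow v 0 x -> vpow v a y -> vpow v a (x * y).
Proof. by move=> x0 ay; have := vpowM x0 ay; rewrite add0r. Qed.

Lemma vpow0X x k : vpow v 0 x -> vpow v 0 (x ^+ k).
Proof. by move=> x0; elim: k => [|k IHk]; rewrite ?expr0 ?vpow01 // exprS vpow0Ml. Qed.

Lemma vpowXS a x k : 0 <= a -> vpow v a x -> vpow v a (x ^+ k.+1).
Proof.
move=> a_ge0 ax; rewrite exprS -[a]addr0; apply: vpowM => //.
exact/vpow0X/(vpowW a_ge0).
Qed.

Lemma vunit1 : vunit v 1.
Proof. by rewrite /vunit oner_neq0 val1. Qed.

Lemma vunitM x y : vunit v x -> vunit v y -> vunit v (x * y).
Proof.
rewrite /vunit => /andP[x0 /eqP vx] /andP[y0 /eqP vy].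
by rewrite mulf_neq0 // valM // vx vy.
Qed.

Lemma vunitV x : vunit v x -> vunit v x^-1.
Proof. by rewrite /vunit => /andP[x0 /eqP vx]; rewrite invr_neq0 // valV // vx. Qed.

Lemma vunitX x k : vunit v x -> vunit v (x ^+ k).
Proof. by move=> Ux; elim: k => [|k IHk]; rewrite ?expr0 ?vunit1 // exprS vunitM. Qed.

Lemma vunit_neq0 x : vunit v x -> x != 0.
Proof. by case/andP. Qed.

Lemma vunit_vpow0 x : vunit v x -> vpow v 0 x.
Proof. by case/andP => _ /eqP vx; rewrite /vpow vx lexx orbT. Qed.

Lemma vunitE x : vunit v x = vpow v 0 x && ~~ vpow v 1 x.
Proof.
rewrite /vunit /vpow; have [//|x0 /=] := eqVneq x 0.
by rewrite -ltNge; apply/eqP/idP => [->//|]; lia.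
Qed.

Lemma vpow_vunitMl k x y : vunit v x -> vpow v k (x * y) = vpow v k y.
Proof.
rewrite /vpow /vunit => /andP[x0 /eqP vx]; rewrite mulf_eq0 (negPf x0) /=.
by have [//|y0] := eqVneq y 0; rewrite valM // vx add0r.
Qed.

Lemma vcong_sym x y : vcong v x y -> vcong v y x.
Proof. by move/vpowN; rewrite opprB. Qed.

Lemma vcong_trans y x z : vcong v x y -> vcong v y z -> vcong v x z.
Proof. by move=> xy yz; have := vpowD xy yz; rewrite addrA subrK. Qed.

Lemma vcongD x x' y y' : vcong v x x' -> vcong v y y' -> vcong v (x + y) (x' + y').
Proof. by move=> xx yy; have := vpowD xx yy; rewrite opprD addrACA. Qed.

Lemma vcongN x x' : vcong v x x' -> vcong v (- x) (- x').
Proof. by move/vpowN; rewrite opprB opprK addrC. Qed.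

Lemma vcongM x x' y y' : vpow v 0 x' -> vpow v 0 y ->
  vcong v x x' -> vcong v y y' -> vcong v (x * y) (x' * y').
Proof.
move=> x'0 y0 xx yy.
have -> : x * y - x' * y' = (x - x') * y + x' * (y - y').
  by rewrite mulrBl mulrBr addrA subrK.
by apply: vpowD; [rewrite -[1]addr0 vpowM | rewrite vpow0Ml].
Qed.

End Valuation.

Section ResidueField.
Variables (L : fieldType) (v : L -> int) (Q : nat) (s : seq L).
Hypotheses (Hv : is_discrete_valuation v) (size_s : size s = Q)
  (s_int : all (vpow v 0) s)
  (s_sep : forall i j : nat, (i < Q)%N -> (j < Q)%N ->
     vcong v (nth 0 s i) (nth 0 s j) -> i = j)
  (s_cover : forall x : L, vpow v 0 x ->
     exists2 i : nat, (i < Q)%N & vcong v x (nth 0 s i)).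

Local Notation O := (vpow v 0).

Let O_add x y : O x -> O y -> O (x + y). Proof. exact: vpowD. Qed.
Let O_opp x : O x -> O (- x). Proof. exact: vpowN. Qed.
Let O_mul x y : O x -> O y -> O (x * y). Proof. exact: vpow0Ml. Qed.
Let O_0 : O 0. Proof. exact: vpow0. Qed.
Let O_1 : O 1. Proof. exact: vpow01. Qed.

Let Q_gt0 : (0 < Q)%N.
Proof. by case: (s_cover O_0) => i Qi _; apply: leq_ltn_trans Qi. Qed.

(* The residue field O/p, carried by the indices of the representatives [s]. *)
Definition residue := 'I_Q.
HB.instance Definition _ := Finite.copy residue 'I_Q.
Definition res_rep (i : residue) : L := nth 0 s i.
Definition res_proj (x : L) : residue :=
  odflt (Ordinal Q_gt0) [pick i | vcong v x (res_rep i)].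

Let O_rep i : O (res_rep i).
Proof. by apply: (allP s_int); rewrite mem_nth ?size_s. Qed.

Local Hint Resolve O_add O_opp O_mul O_0 O_1 O_rep : core.

Lemma res_proj_congr x : O x -> vcong v x (res_rep (res_proj x)).
Proof.
move=> Ox; rewrite /res_proj; case: pickP => [i //|none].
by case: (s_cover Ox) => i Qi xi; have := none (Ordinal Qi); rewrite /res_rep xi.
Qed.

Lemma res_rep_inj i j : vcong v (res_rep i) (res_rep j) -> i = j.
Proof. by move=> ij; apply/val_inj/(s_sep (ltn_ord i) (ltn_ord j)). Qed.

Lemma res_repK : cancel res_rep res_proj.
Proof. by move=> i; apply/res_rep_inj/(vcong_sym Hv)/res_proj_congr. Qed.

Lemma eq_res_proj x y : O x -> O y -> (res_proj x == res_proj y) = vcong v x y.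
Proof.
move=> Ox Oy; have [xx' yy'] := (res_proj_congr Ox, res_proj_congr Oy).
apply/eqP/idP => [e | xy].
  by rewrite e in xx'; apply: (vcong_trans Hv xx' (vcong_sym Hv yy')).
exact/res_rep_inj/(vcong_trans Hv (vcong_sym Hv xx'))/(vcong_trans Hv xy).
Qed.

Definition res_add i j := res_proj (res_rep i + res_rep j).
Definition res_opp i := res_proj (- res_rep i).
Definition res_mul i j := res_proj (res_rep i * res_rep j).
Definition res_inv i :=
  if vunit v (res_rep i) then res_proj (res_rep i)^-1 else i.

Let rep_projK x : O x -> vcong v (res_rep (res_proj x)) x.
Proof. by move/res_proj_congr/(vcong_sym Hv). Qed.

Lemma res_addE x y : O x -> O y ->
  res_add (res_proj x) (res_proj y) = res_proj (x + y).
Proof.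
move=> Ox Oy; apply/eqP; rewrite eq_res_proj; auto.
by apply: (vcongD Hv); apply: rep_projK.
Qed.

Lemma res_oppE x : O x -> res_opp (res_proj x) = res_proj (- x).
Proof.
by move=> Ox; apply/eqP; rewrite eq_res_proj; auto; apply: (vcongN Hv); apply: rep_projK.
Qed.

Lemma res_mulE x y : O x -> O y ->
  res_mul (res_proj x) (res_proj y) = res_proj (x * y).
Proof.
move=> Ox Oy; apply/eqP; rewrite eq_res_proj; auto.
by apply: (vcongM Hv); auto; apply: rep_projK.
Qed.

Lemma res_addA : associative res_add.
Proof.
move=> i j k; rewrite -[i]res_repK -[j]res_repK -[k]res_repK.
by rewrite !res_addE ?addrA; auto.
Qed.

Lemma res_addC : commutative res_add.
Proof. by move=> i j; rewrite /res_add addrC. Qed.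

Lemma res_add0 : left_id (res_proj 0) res_add.
Proof. by move=> i; rewrite -[i]res_repK res_addE ?add0r; auto. Qed.

Lemma res_addN : left_inverse (res_proj 0) res_opp res_add.
Proof. by move=> i; rewrite -[i]res_repK res_oppE ?res_addE ?addNr; auto. Qed.

HB.instance Definition _ :=
  GRing.isZmodule.Build residue res_addA res_addC res_add0 res_addN.

Lemma res_mulA : associative res_mul.
Proof.
move=> i j k; rewrite -[i]res_repK -[j]res_repK -[k]res_repK.
by rewrite !res_mulE ?mulrA; auto.
Qed.

Lemma res_mulC : commutative res_mul.
Proof. by move=> i j; rewrite /res_mul mulrC. Qed.

Lemma res_mul1 : left_id (res_proj 1) res_mul.
Proof. by move=> i; rewrite -[i]res_repK res_mulE ?mul1r; auto. Qed.

Lemma res_mulDl : left_distributive res_mul res_add.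
Proof.
move=> i j k; rewrite -[i]res_repK -[j]res_repK -[k]res_repK.
by rewrite res_addE ?res_mulE ?res_addE ?mulrDl; auto.
Qed.

Lemma res_one_neq0 : res_proj 1 != res_proj 0.
Proof. by rewrite eq_res_proj // subr0 /vpow oner_eq0 val1. Qed.

HB.instance Definition _ := GRing.Zmodule_isComNzRing.Build residue
  res_mulA res_mulC res_mul1 res_mulDl res_one_neq0.

Lemma res_mulVf (i : residue) : i != 0 -> res_mul (res_inv i) i = 1.
Proof.
move=> i0; have Ui : vunit v (res_rep i).
  by rewrite vunitE O_rep -(subr0 (res_rep i)) -eq_res_proj // res_repK.
have [i_neq0 Oi'] := (vunit_neq0 Ui, vunit_vpow0 (vunitV Hv Ui)).
by rewrite /res_inv Ui -[X in res_mul _ X]res_repK res_mulE ?mulVf.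
Qed.

Lemma res_inv0 : res_inv 0 = 0.
Proof.
have : vcong v (res_rep 0) 0 by rewrite -eq_res_proj ?res_repK.
by rewrite /res_inv vunitE O_rep subr0 => ->.
Qed.

HB.instance Definition _ := GRing.ComNzRing_isField.Build residue res_mulVf res_inv0.

Lemma res_projM x y : O x -> O y -> res_proj (x * y) = res_proj x * res_proj y.
Proof. by move=> Ox Oy; rewrite -res_mulE. Qed.

Lemma res_projX x k : O x -> res_proj (x ^+ k) = res_proj x ^+ k.
Proof.
move=> Ox; elim: k => [|k IHk]; first by rewrite !expr0.
by rewrite !exprS res_projM ?IHk ?vpow0X.
Qed.

Lemma res_proj_vunit x : vunit v x -> res_proj x != 0.
Proof. by rewrite vunitE => /andP[Ox]; rewrite -[0]/(res_proj 0) eq_res_proj ?subr0. Qed.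

Lemma residue_card_gt1 : (1 < Q)%N.
Proof. by have := finNzRing_gt1 [the finNzRingType of residue]; rewrite card_ord. Qed.

Lemma residue_unity_root (i : residue) : i != 0 -> i ^+ Q.-1 = 1.
Proof.
move=> i0; apply: (mulIf i0); rewrite mul1r -exprSr prednK ?(ltnW residue_card_gt1) //.
by have := expf_card i; rewrite card_ord.
Qed.

Lemma vunit_expr_card_pred x : vunit v x -> vcong v (x ^+ Q.-1) 1.
Proof.
move=> Ux; have Ox := vunit_vpow0 Ux.
by rewrite -eq_res_proj ?vpow0X // res_projX // residue_unity_root ?res_proj_vunit.
Qed.

Lemma residue_generator : exists2 g : L, vunit v g &
  (forall k, vcong v (g ^+ k) 1 -> (Q.-1 %| k)%N) /\
  (forall x, vunit v x -> exists k : 'I_Q.-1, vcong v x (g ^+ k)).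
Proof.
have Q1_gt0 : (0 < Q.-1)%N by rewrite ltn_predRL residue_card_gt1.
pose units := [seq i <- enum residue | i != 0].
have units_roots : all Q.-1.-unity_root units.
  by apply/allP => i; rewrite mem_filter unity_rootE => /andP[/residue_unity_root-> _].
have units_size : (Q.-1 <= size units)%N.
  have -> : size units = #|predC1 (0 : residue)| by rewrite cardE /units enumT.
  by rewrite cardC1 card_ord.
have [|u units_u prim_u] := hasP (has_prim_root Q1_gt0 units_roots _ units_size).
  by rewrite filter_uniq ?enum_uniq.
have u_neq0 : u != 0 by move: units_u; rewrite mem_filter => /andP[].
have Ug : vunit v (res_rep u).
  by rewrite vunitE O_rep -(subr0 (res_rep u)) -eq_res_proj // res_repK.
have res_proj_gX k : res_proj (res_rep u ^+ k) = u ^+ k by rewrite res_projX ?res_repK.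
exists (res_rep u) => //; split=> [k gk | x Ux].
  by rewrite (prim_order_dvd prim_u) -res_proj_gX eq_res_proj ?vpow0X.
have /(prim_rootP prim_u)[k xk] := residue_unity_root (res_proj_vunit Ux).
by exists k; rewrite -eq_res_proj ?vpow0X ?vunit_vpow0 // res_proj_gX xk.
Qed.

End ResidueField.

Section PrimePowerCongruence.
Variables (L : fieldType) (v : L -> int) (p : nat).
Hypotheses (Hv : is_discrete_valuation v) (p_pr : prime p)
  (p_vpow1 : vpow v 1 p%:R).

Lemma vpow_expr_prime_sub1 (i : nat) y : (0 < i)%N -> vpow v i y ->
  vpow v i.+1 ((1 + y) ^+ p - 1).
Proof.
move=> i_gt0 iy; rewrite [1 + y]addrC exprD1n big_ord_recl expr0 bin0 mulr1n.
rewrite addrAC subrr add0r.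
apply: (big_ind (vpow v i.+1)) => [|a b|k _]; [exact: vpow0 | exact: vpowD |].
rewrite lift0; have [kp|] := ltnP k.+1 p.
  have /dvdnP[c ->] : (p %| 'C(p, k.+1))%N by rewrite prime_dvd_bin ?kp.
  rewrite -mulr_natr natrM; apply: (vpowW (b := i%:Z + (0 + 1))); first by lia.
  by apply: (vpowM Hv); [apply: vpowXS | apply: (vpowM Hv) (vpow0_nat _ _) _].
move=> pk; have -> : k.+1 = p by apply/eqP; rewrite eqn_leq ltn_ord pk.
have -> : p = p.-2.+2 by have := prime_gt1 p_pr; lia.
rewrite binn mulr1n exprS; apply: (vpowW (b := i%:Z + i%:Z)); first by lia.
by apply: (vpowM Hv) => //; apply: vpowXS.
Qed.

Lemma vcong1_expr_pexp x j : vcong v x 1 -> vpow v j.+1 (x ^+ (p ^ j) - 1).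
Proof.
move=> x1; elim: j => [|j IHj]; first by rewrite expn0 expr1.
rewrite expnSr exprM -[x ^+ _](subrK 1) [_ - 1 + 1]addrC.
exact: vpow_expr_prime_sub1.
Qed.

End PrimePowerCongruence.

Lemma expr_coprime_eq1 (R : idomainType) (y : R) a b : coprime a b -> (0 < a)%N ->
  y ^+ a = 1 -> y ^+ b = 1 -> y = 1.
Proof.
move=> co_ab a_gt0 ya yb; have [d prim_d da] := prim_order_exists a_gt0 ya.
have db : (d %| b)%N by rewrite (prim_order_dvd prim_d) yb.
have /eqP d1 : d == 1%N by rewrite -dvdn1 -(eqP co_ab) dvdn_gcd da.
by rewrite -[y]expr1 -d1 prim_expr_order.
Qed.

Lemma pchar_expr_pexp_eq1 (R : idomainType) ell (y : R) k :
  ell \in [pchar R] -> y ^+ (ell ^ k) = 1 -> y = 1.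
Proof.
move=> ch; elim: k y => [|k IHk] y; first by rewrite expr1.
rewrite expnS exprM => /IHk yell.
have := pFrobenius_autB_comm ch (commr1 y).
rewrite !pFrobenius_autE yell expr1n subrr => /eqP.
by rewrite expf_eq0 subr_eq0 => /andP[_ /eqP].
Qed.

Lemma closed_field_prim_root (F : closedFieldType) n :
  (0 < n)%N -> n%:R != 0 :> F -> exists z : F, n.-primitive_root z.
Proof.
move=> n_gt0 nF; pose P : {poly F} := 'X^n - 1.
have [r Dp] := closed_field_poly_normal P.
rewrite (monicP _) ?monicXnsubC // scale1r in Dp.
have rn1 : all n.-unity_root r by apply/allP=> z; rewrite -root_prod_XsubC -Dp.
have sz_r : (n < (size r).+1)%N by rewrite -(size_prod_XsubC r id) -Dp size_XnsubC.
have [|z] := hasP (has_prim_root n_gt0 rn1 _ sz_r); last by exists z.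
by rewrite -separable_prod_XsubC -Dp separable_Xn_sub_1.
Qed.

Section ValuationRing.
Variables (F : fieldType) (O : F -> bool).
Hypothesis HO : valuation_ring O.

Lemma vring1 : O 1. Proof. by case: HO. Qed.
Lemma vringB x y : O x -> O y -> O (x - y).
Proof. by case: HO => _ OB _ _; apply: OB. Qed.
Lemma vringM x y : O x -> O y -> O (x * y).
Proof. by case: HO => _ _ OM _; apply: OM. Qed.
Lemma vring0 : O 0. Proof. by rewrite -(subrr 1) vringB ?vring1. Qed.
Lemma vringN x : O x -> O (- x). Proof. by move=> Ox; rewrite -sub0r vringB ?vring0. Qed.
Lemma vringD x y : O x -> O y -> O (x + y).
Proof. by move=> Ox Oy; rewrite -[y]opprK vringB ?vringN. Qed.
Lemma vringX x k : O x -> O (x ^+ k).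
Proof. by move=> Ox; elim: k => [|k IHk]; rewrite ?expr0 ?vring1 // exprS vringM. Qed.

Lemma vring_unity_root x N : (0 < N)%N -> x ^+ N = 1 -> O x.
Proof.
move=> N_gt0 xN; have x_neq0 : x != 0.
  by apply: contra_eq_neq xN => ->; rewrite expr0n eqn0Ngt N_gt0 eq_sym oner_neq0.
case: HO => _ _ _ /(_ x x_neq0)/orP[//|Oxinv].
have -> : x = x^-1 ^+ N.-1.
  rewrite exprVn -[x in LHS]invrK; congr _^-1.
  by apply: (mulfI x_neq0); rewrite mulfV // -exprS prednK.
exact: vringX.
Qed.

End ValuationRing.

Section Reduction.
Variables (Lam0 Lam1 : fieldType) (O0 : Lam0 -> bool) (red : Lam0 -> Lam1).
Hypothesis Hred : reduction_map O0 red.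

Let HO : valuation_ring O0. Proof. by case: Hred. Qed.

Lemma red1 : red 1 = 1. Proof. by case: Hred. Qed.
Lemma redD x y : O0 x -> O0 y -> red (x + y) = red x + red y.
Proof. by case: Hred => _ _ rD _ _; apply: rD. Qed.
Lemma redM x y : O0 x -> O0 y -> red (x * y) = red x * red y.
Proof. by case: Hred => _ _ _ rM _; apply: rM. Qed.
Lemma red0 : red 0 = 0.
Proof. by case: Hred => _ _ _ _ r_eq0; apply/eqP; rewrite r_eq0 ?eqxx ?vring0. Qed.
Lemma redX x k : O0 x -> red (x ^+ k) = red x ^+ k.
Proof.
move=> Ox; elim: k => [|k IHk]; first by rewrite !expr0 red1.
by rewrite !exprS redM ?IHk ?vringX.
Qed.

Lemma red_sum (I : Type) (r : seq I) (G : I -> Lam0) : (forall i, O0 (G i)) ->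
  red (\sum_(i <- r) G i) = \sum_(i <- r) red (G i).
Proof.
move=> OG; elim: r => [|i r IHr]; first by rewrite !big_nil red0.
by rewrite !big_cons redD ?IHr //; apply: (big_ind O0 (vring0 HO) (vringD HO)).
Qed.

Lemma red_unity_root_inj ell x N : ell \in [pchar Lam1] -> (0 < N)%N ->
  ~~ (ell %| N)%N -> x ^+ N = 1 -> red x = 1 -> x = 1.
Proof.
move=> ch N_gt0 ellN xN rx; have Ox := vring_unity_root HO N_gt0 xN.
apply/eqP; apply: contraR ellN => x_neq1.
have : \sum_(i < N) x ^+ i = 0.
  apply/eqP; have := subrX1 x N; rewrite xN subrr => /esym/eqP.
  by rewrite mulf_eq0 subr_eq0 (negPf x_neq1).
move/(congr1 red); rewrite red0 red_sum => [|i]; last exact: vringX.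
under eq_bigr do rewrite redX // rx expr1n.
by rewrite sumr_const card_ord => /eqP; rewrite (dvdn_pcharf ch).
Qed.

End Reduction.

Section UnityRootLift.
Variables (Lam0 Lam1 : fieldType) (O0 : Lam0 -> bool) (red : Lam0 -> Lam1).
Variables (ell N : nat) (z : Lam0).
Hypotheses (Hred : reduction_map O0 red) (ch1 : ell \in [pchar Lam1])
  (ell_N : ~~ (ell %| N)%N) (prim_z : N.-primitive_root z).

Let N_gt0 : (0 < N)%N. Proof. exact: prim_order_gt0 prim_z. Qed.
Let HO : valuation_ring O0. Proof. by case: Hred. Qed.
Let Oz : O0 z := vring_unity_root HO N_gt0 (prim_expr_order prim_z).

Lemma red_prim_root : N.-primitive_root (red z).
Proof.
have zN : red z ^+ N = 1 by rewrite -(redX Hred) // prim_expr_order // (red1 Hred).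
have [d prim_d dN] := prim_order_exists N_gt0 zN.
suff /eqP-> : N == d by [].
rewrite eqn_dvd dN andbT (prim_order_dvd prim_z); apply/eqP.
apply: (red_unity_root_inj Hred ch1 N_gt0 ell_N).
  by rewrite exprAC (prim_expr_order prim_z) expr1n.
by rewrite (redX Hred) ?(prim_expr_order prim_d).
Qed.

(* Off the N-th roots of unity no index is found and the lift is z ^+ 0 = 1. *)
Definition unity_lift (y : Lam1) : Lam0 :=
  z ^+ oapp val 0%N [pick i : 'I_N | y == red z ^+ i].

Let red_z_index y : y ^+ N = 1 ->
  red z ^+ oapp val 0%N [pick i : 'I_N | y == red z ^+ i] = y.
Proof.
move=> yN; case: pickP => [i /eqP-> //|none].
by have [i yi] := prim_rootP red_prim_root yN; have := none i; rewrite yi eqxx.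
Qed.

Lemma unity_liftK y : y ^+ N = 1 -> red (unity_lift y) = y.
Proof. by move=> yN; rewrite /unity_lift (redX Hred) ?red_z_index. Qed.

Lemma unity_lift_unity_root y : unity_lift y ^+ N = 1.
Proof. by rewrite /unity_lift exprAC (prim_expr_order prim_z) expr1n. Qed.

Lemma vring_unity_lift y : O0 (unity_lift y).
Proof. exact: (vring_unity_root HO N_gt0 (unity_lift_unity_root y)). Qed.

Lemma unity_lift_neq0 y : unity_lift y != 0.
Proof.
apply: contra_eq_neq (unity_lift_unity_root y) => ->.
by rewrite expr0n eqn0Ngt N_gt0 eq_sym oner_neq0.
Qed.

Lemma unity_liftM y y' : y ^+ N = 1 -> y' ^+ N = 1 ->
  unity_lift (y * y') = unity_lift y * unity_lift y'.
Proof.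
move=> yN y'N; rewrite /unity_lift -exprD; apply/eqP.
rewrite (eq_prim_root_expr prim_z) -(eq_prim_root_expr red_prim_root).
by rewrite exprD !red_z_index // exprMn yN y'N mulr1.
Qed.

Lemma unity_lift1 : unity_lift 1 = 1.
Proof.
have := unity_liftM (expr1n _ N) (expr1n _ N); rewrite mulr1.
by move/(canLR (mulKf (unity_lift_neq0 1))); rewrite mulVf ?unity_lift_neq0.
Qed.

End UnityRootLift.

Section Characters.
Variables (L : fieldType) (vL : L -> int) (h : nat) (Lam : fieldType).
Hypothesis Hv : is_discrete_valuation vL.

Section OneCharacter.
Variable chi : L -> Lam.
Hypothesis Hchi : Th_char vL h chi.

Lemma Th_charM x y : vunit vL x -> vunit vL y -> chi (x * y) = chi x * chi y.
Proof. by case: Hchi => chiM _; apply: chiM. Qed.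

Lemma Th_char_cong1 x : vunit vL x -> vpow vL h (x - 1) -> chi x = 1.
Proof. by case: Hchi => _ chi1; apply: chi1. Qed.

Lemma Th_char1 : chi 1 = 1.
Proof. by rewrite Th_char_cong1 ?vunit1 // subrr vpow0. Qed.

Lemma Th_charX x k : vunit vL x -> chi (x ^+ k) = chi x ^+ k.
Proof.
move=> Ux; elim: k => [|k IHk]; first by rewrite !expr0 Th_char1.
by rewrite !exprS Th_charM ?IHk ?vunitX.
Qed.

Lemma Th_char_neq0 x : vunit vL x -> chi x != 0.
Proof.
move=> Ux; apply/eqP => chi0; have := Th_charM Ux (vunitV Hv Ux).
by rewrite mulfV ?(vunit_neq0 Ux) // Th_char1 chi0 mul0r => /eqP; rewrite oner_eq0.
Qed.

End OneCharacter.

Lemma Th_char_div (chi1 chi2 : L -> Lam) :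
  Th_char vL h chi1 -> Th_char vL h chi2 -> Th_char vL h (fun x => chi1 x / chi2 x).
Proof.
move=> H1 H2; split=> [x y Ux Uy | x Ux x1].
  by rewrite !Th_charM // mulf_div.
by rewrite !Th_char_cong1 ?divr1.
Qed.

Lemma Th_char_mul (chi1 chi2 : L -> Lam) :
  Th_char vL h chi1 -> Th_char vL h chi2 -> Th_char vL h (fun x => chi1 x * chi2 x).
Proof.
move=> H1 H2; split=> [x y Ux Uy | x Ux x1].
  by rewrite !Th_charM // mulrACA.
by rewrite !Th_char_cong1 ?mulr1.
Qed.

Lemma Th_char_expr (chi : L -> Lam) k :
  Th_char vL h chi -> Th_char vL h (fun x => chi x ^+ k).
Proof.
move=> Hchi; split=> [x y Ux Uy | x Ux x1].
  by rewrite Th_charM // exprMn.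
by rewrite Th_char_cong1 ?expr1n.
Qed.

End Characters.

Section Fibers.
Variables (L : fieldType) (vL : L -> int) (p Q h ell : nat) (g : L).
Hypotheses (Hv : is_discrete_valuation vL) (p_pr : prime p)
  (p_vpow1 : vpow vL 1 p%:R) (h_gt0 : (0 < h)%N)
  (ell_pr : prime ell) (ell_neq_p : ell != p)
  (vunit_card_pred : forall x, vunit vL x -> vcong vL (x ^+ Q.-1) 1)
  (Ug : vunit vL g)
  (g_order : forall k, vcong vL (g ^+ k) 1 -> (Q.-1 %| k)%N)
  (g_gen : forall x, vunit vL x -> exists k : 'I_Q.-1, vcong vL x (g ^+ k)).

Local Notation U := (vunit vL).
Local Notation N := (Q.-1 * p ^ h.-1)%N.
Local Notation N' := (N`_ell^')%N.
Local Notation m := (logn ell Q.-1).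

Let Q1_gt0 : (0 < Q.-1)%N.
Proof. by have [k _] := g_gen Ug; apply: leq_ltn_trans (ltn_ord k). Qed.

Let N_gt0 : (0 < N)%N.
Proof. by rewrite muln_gt0 Q1_gt0 expn_gt0 prime_gt0. Qed.

Lemma exponent_split : N = (N' * ell ^ m)%N.
Proof.
rewrite -{1}(partnC ell N_gt0) mulnC; congr (_ * _)%N.
rewrite p_part lognM ?expn_gt0 ?(prime_gt0 p_pr) //.
by rewrite lognX (logn_prime _ p_pr) (negPf ell_neq_p) muln0 addn0.
Qed.

Lemma ell_ndvd_exponent' : ~~ (ell %| N')%N.
Proof. by rewrite -p'natE // part_pnat. Qed.

Section Exponent.
Variables (Lam : fieldType) (chi : L -> Lam).
Hypothesis Hchi : Th_char vL h chi.

Lemma Th_char_cong1_pexp x : U x -> vcong vL x 1 -> chi x ^+ (p ^ h.-1) = 1.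
Proof.
move=> Ux x1; rewrite -(Th_charX Hv Hchi) // (Th_char_cong1 Hchi) ?vunitX //.
by have := vcong1_expr_pexp Hv p_pr p_vpow1 h.-1 x1; rewrite prednK.
Qed.

Lemma Th_char_exponent x : U x -> chi x ^+ N = 1.
Proof.
move=> Ux; rewrite exprM -(Th_charX Hv Hchi) //.
by rewrite Th_char_cong1_pexp ?vunitX ?vunit_card_pred.
Qed.

End Exponent.

Definition dlog x : nat := oapp val 0%N [pick k : 'I_Q.-1 | vcong vL x (g ^+ k)].

Lemma dlog_spec x : U x -> vcong vL x (g ^+ dlog x).
Proof.
move=> Ux; rewrite /dlog; case: pickP => [k //|none].
by have [k xk] := g_gen Ux; have := none k; rewrite xk.
Qed.

Lemma vcong_gX_eqmod a b : vcong vL (g ^+ a) (g ^+ b) -> a = b %[mod Q.-1].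
Proof.
wlog le_ba : a b / (b <= a)%N.
  move=> wlog_ab; have [/wlog_ab//|/ltnW le_ab ab] := leqP b a.
  exact/esym/wlog_ab/(vcong_sym Hv).
have -> : g ^+ a - g ^+ b = g ^+ b * (g ^+ (a - b) - 1).
  by rewrite mulrBr mulr1 -exprD subnKC.
rewrite vpow_vunitMl ?vunitX // => /g_order.
by rewrite -eqn_mod_dvd // => /eqP.
Qed.

Lemma dlogM x y : U x -> U y -> dlog (x * y) = (dlog x + dlog y)%N %[mod Q.-1].
Proof.
move=> Ux Uy; apply: vcong_gX_eqmod; rewrite exprD.
apply: (vcong_trans Hv (vcong_sym Hv (dlog_spec (vunitM Hv Ux Uy)))).
by apply: (vcongM Hv); rewrite ?vunit_vpow0 ?vunitX ?dlog_spec.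
Qed.

Lemma dlog_cong1 x : U x -> vcong vL x 1 -> dlog x = 0 %[mod Q.-1].
Proof.
move=> Ux x1; apply: vcong_gX_eqmod; rewrite expr0.
exact: (vcong_trans Hv (vcong_sym Hv (dlog_spec Ux)) x1).
Qed.

Lemma dlog_g : dlog g = 1 %[mod Q.-1].
Proof. by apply: vcong_gX_eqmod; rewrite expr1; apply/(vcong_sym Hv)/dlog_spec. Qed.

Lemma vunit_dlog_decomp x : U x ->
  exists2 u, U u /\ vcong vL u 1 & x = g ^+ dlog x * u.
Proof.
move=> Ux; have Ugk := vunitX Hv (dlog x) Ug; have gk_neq0 := vunit_neq0 Ugk.
exists ((g ^+ dlog x)^-1 * x); last by rewrite mulVKf.
split; first by rewrite vunitM ?vunitV.
by rewrite -(vpow_vunitMl Hv _ _ Ugk) mulrBr mulVKf // mulr1 dlog_spec.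
Qed.

Variables (Lam0 Lam1 : fieldType) (O0 : Lam0 -> bool) (red : Lam0 -> Lam1).
Variables (z w : Lam0).
Hypotheses (Hred : reduction_map O0 red) (ch1 : ell \in [pchar Lam1])
  (prim_z : N'.-primitive_root z) (prim_w : (ell ^ m).-primitive_root w).

Let HO : valuation_ring O0. Proof. by case: Hred. Qed.
Let N'_gt0 : (0 < N')%N. Proof. exact: prim_order_gt0 prim_z. Qed.
Let ellm_gt0 : (0 < ell ^ m)%N. Proof. exact: prim_order_gt0 prim_w. Qed.
Let Ow : O0 w := vring_unity_root HO ellm_gt0 (prim_expr_order prim_w).

(* [omega] generates the characters of T_h of l-power order, see
   [Th_char_ell_power]. *)
Definition omega x : Lam0 := w ^+ dlog x.

Lemma expr_w_eqmod a b : a = b %[mod Q.-1] -> w ^+ a = w ^+ b.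
Proof.
move=> ab; apply/eqP; rewrite (eq_prim_root_expr prim_w).
by rewrite -(modn_dvdm a (pfactor_dvdnn ell Q.-1)) ab modn_dvdm ?pfactor_dvdnn.
Qed.

Lemma omega_cong1 u : U u -> vcong vL u 1 -> omega u = 1.
Proof. by move=> Uu u1; rewrite /omega (expr_w_eqmod (dlog_cong1 Uu u1)). Qed.

Lemma omega_g : omega g = w.
Proof. by rewrite /omega (expr_w_eqmod dlog_g). Qed.

Lemma omega_Th_char : Th_char vL h omega.
Proof.
split=> [x y Ux Uy | x Ux x1].
  by rewrite /omega -exprD; apply/expr_w_eqmod/dlogM.
by rewrite omega_cong1 //; apply: vpowW x1; lia.
Qed.

Lemma vring_omega x : O0 (omega x).
Proof. exact: vringX. Qed.

Lemma red_omega x : red (omega x) = 1.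
Proof.
have red_w : red w = 1.
  apply: (pchar_expr_pexp_eq1 (k := m) ch1).
  by rewrite -(redX Hred) // (prim_expr_order prim_w) (red1 Hred).
by rewrite /omega (redX Hred) // red_w expr1n.
Qed.

Lemma Th_char_ell_power (e : L -> Lam0) : Th_char vL h e ->
  (forall x, U x -> e x ^+ (ell ^ m) = 1) ->
  exists i : 'I_(ell ^ m), forall x, U x -> e x = omega x ^+ i.
Proof.
move=> He e_ellm.
have co_ellm_p : coprime (ell ^ m) (p ^ h.-1).
  by rewrite coprimeXl // coprimeXr // prime_coprime // dvdn_prime2.
have e_cong1 u : U u -> vcong vL u 1 -> e u = 1.
  move=> Uu u1; apply: (expr_coprime_eq1 co_ellm_p ellm_gt0); first exact: e_ellm.
  exact: Th_char_cong1_pexp.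
have [i ei] := prim_rootP prim_w (e_ellm g Ug).
exists i => x Ux; have [u [Uu u1] ->] := vunit_dlog_decomp Ux.
have Ugk : U (g ^+ dlog x) := vunitX Hv _ Ug.
rewrite (Th_charM He Ugk Uu) (Th_charM omega_Th_char Ugk Uu).
rewrite (e_cong1 u Uu u1) (omega_cong1 Uu u1) !mulr1 (Th_charX Hv He) // ei.
by rewrite (Th_charX Hv omega_Th_char) // omega_g exprAC.
Qed.

Local Notation lift := (unity_lift red N' z).
Let liftM := unity_liftM Hred ch1 ell_ndvd_exponent' prim_z.
Let liftK := unity_liftK Hred ch1 ell_ndvd_exponent' prim_z.
Let lift1 := unity_lift1 Hred ch1 ell_ndvd_exponent' prim_z.
Let lift_neq0 := unity_lift_neq0 red prim_z.
Let vring_lift := vring_unity_lift Hred prim_z.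

Lemma Th_char_ell'_unity (psi : L -> Lam1) x : Th_char vL h psi -> U x ->
  psi x ^+ N' = 1.
Proof.
move=> Hpsi Ux; apply: (pchar_expr_pexp_eq1 (k := m) ch1).
by rewrite -exprM -exponent_split (Th_char_exponent Hpsi).
Qed.

Lemma lift_Th_char psi : Th_char vL h psi -> Th_char vL h (fun x => lift (psi x)).
Proof.
move=> Hpsi; split=> [x y Ux Uy | x Ux x1].
  by rewrite (Th_charM Hpsi) // liftM // Th_char_ell'_unity.
by rewrite (Th_char_cong1 Hpsi) // lift1.
Qed.

Lemma red_lift psi x : Th_char vL h psi -> U x -> red (lift (psi x)) = psi x.
Proof. by move=> Hpsi Ux; rewrite liftK // Th_char_ell'_unity. Qed.

Definition fiber_char (psi : L -> Lam1) (i : nat) x := lift (psi x) * omega x ^+ i.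

Lemma fiber_char_Th_char psi i : Th_char vL h psi -> Th_char vL h (fiber_char psi i).
Proof.
by move=> Hpsi; apply: Th_char_mul (lift_Th_char Hpsi) (Th_char_expr i omega_Th_char).
Qed.

Lemma red_fiber_char psi i x : Th_char vL h psi -> U x ->
  red (fiber_char psi i x) = psi x.
Proof.
move=> Hpsi Ux; rewrite /fiber_char (redM Hred) ?vring_lift ?vringX ?vring_omega //.
by rewrite (redX Hred _ (vring_omega x)) red_omega expr1n mulr1 red_lift.
Qed.

Lemma fiber_char_inj psi (i j : 'I_(ell ^ m)) :
  fiber_char psi i g = fiber_char psi j g -> i = j.
Proof.
rewrite /fiber_char omega_g => /(mulfI (lift_neq0 _))/eqP.
by rewrite (eq_prim_root_expr prim_w) !modn_small // => /eqP/val_inj.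
Qed.

Lemma fiber_char_complete psi chi : Th_char vL h psi -> Th_char vL h chi ->
  (forall x, U x -> red (chi x) = psi x) ->
  exists i : 'I_(ell ^ m), forall x, U x -> chi x = fiber_char psi i x.
Proof.
move=> Hpsi Hchi red_chi; pose e x := chi x / lift (psi x).
have He : Th_char vL h e := Th_char_div Hchi (lift_Th_char Hpsi).
have e_ellm x : U x -> e x ^+ (ell ^ m) = 1.
  move=> Ux; have eN := Th_char_exponent He Ux.
  have Oe : O0 (e x) := vring_unity_root HO N_gt0 eN.
  have red_e : red (e x) = 1.
    apply: (mulIf (Th_char_neq0 Hv Hpsi Ux)); rewrite mul1r.
    by rewrite -{2}(red_chi x Ux) -(red_lift Hpsi Ux) -(redM Hred) // divfK.
  apply: (red_unity_root_inj Hred ch1 N'_gt0 ell_ndvd_exponent').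
    by rewrite -exprM mulnC -exponent_split.
  by rewrite (redX Hred) // red_e expr1n.
have [i ei] := Th_char_ell_power He e_ellm.
by exists i => x Ux; rewrite /fiber_char -ei // mulrC divfK.
Qed.

Theorem reduction_surjective (psi : L -> Lam1) : Th_char vL h psi ->
  exists2 chi : L -> Lam0, Th_char vL h chi &
    forall x, U x -> red (chi x) = psi x.
Proof.
move=> Hpsi; exists (fun x => lift (psi x)); first exact: lift_Th_char.
by move=> x; apply: red_lift.
Qed.

Theorem reduction_fiber (psi : L -> Lam1) : Th_char vL h psi ->
  exists chis : 'I_(ell ^ m) -> L -> Lam0,
    [/\ forall i, Th_char vL h (chis i),
        forall i x, U x -> red (chis i x) = psi x,
        forall i j, i != j -> exists2 x, U x & chis i x != chis j x
      & forall chi : L -> Lam0, Th_char vL h chi ->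
          (forall x, U x -> red (chi x) = psi x) ->
          exists i, forall x, U x -> chi x = chis i x].
Proof.
move=> Hpsi; exists (fun i => fiber_char psi i); split.
- by move=> i; apply: fiber_char_Th_char.
- by move=> i x; apply: red_fiber_char.
- by move=> i j ij; exists g => //; apply: contra_neq ij; apply: fiber_char_inj.
- by move=> chi Hchi; apply: fiber_char_complete.
Qed.

End Fibers.

Theorem lemma3p2 (K : fieldType) (L : fieldExtType K) (vL : L -> int)
    (p q n ell : nat) (Lam0 Lam1 : closedFieldType)
    (O0 : Lam0 -> bool) (red : Lam0 -> Lam1) :
  prime p -> prime ell -> ell != p ->
  (* L/K has degree n *)
  \dim {:L} = n ->
  (* vL is a normalized discrete valuation on L whose restriction to K is
     normalized (e(L/K) = 1), K is complete, with residue field F_q of char p,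
     and the residue field of L has q^n elements (f(L/K) = n) *)
  is_discrete_valuation vL ->
  is_discrete_valuation (fun c : K => vL c%:A) ->
  v_complete (fun c : K => vL c%:A) ->
  residue_card (fun c : K => vL c%:A) q ->
  vpow (fun c : K => vL c%:A) 1 p%:R ->
  residue_card vL (q ^ n) ->
  (* Lam0 plays Qbar_l, Lam1 plays Fbar_l, red : Zbar_l -> Fbar_l *)
  [pchar Lam0] =i pred0 -> ell \in [pchar Lam1] ->
  reduction_map O0 red ->
  forall h : nat, (1 <= h)%N ->
  let m := logn ell (q ^ n - 1) in
  (* Gal(L/K)-equivariance: r(chi o s) = r(chi) o s *)
  (forall chi : L -> Lam0, Th_char vL h chi ->
     forall s : L -> L, gal_elt s ->
       (fun x => red ((chi \o s) x)) = (red \o chi) \o s) /\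
  (* surjectivity *)
  (forall psi : L -> Lam1, Th_char vL h psi ->
     exists2 chi : L -> Lam0, Th_char vL h chi &
       forall x, vunit vL x -> red (chi x) = psi x) /\
  (* every fiber has exactly ell^m elements *)
  (forall psi : L -> Lam1, Th_char vL h psi ->
     exists chis : 'I_(ell ^ m) -> L -> Lam0,
       [/\ forall i, Th_char vL h (chis i),
           forall i x, vunit vL x -> red (chis i x) = psi x,
           forall i j, i != j -> exists2 x, vunit vL x & chis i x != chis j x
         & forall chi : L -> Lam0, Th_char vL h chi ->
             (forall x, vunit vL x -> red (chi x) = psi x) ->
             exists i, forall x, vunit vL x -> chi x = chis i x]).
Proof.
move=> p_pr ell_pr ell_neq_p _ Hv _ _ _ pK [s [size_s s_int s_sep s_cover]].
move=> ch0 ch1 Hred h h_gt0 m.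
have p_vpow1 : vpow vL 1 p%:R.
  have -> : p%:R = (p%:R : K)%:A :> L by rewrite scaler_nat.
  by move: pK; rewrite /vpow scaler_eq0 oner_eq0 orbF.
have [g Ug [g_order g_gen]] := residue_generator Hv size_s s_int s_sep s_cover.
have card_pred := vunit_expr_card_pred Hv size_s s_int s_sep s_cover.
have prim_root k : (0 < k)%N -> exists z : Lam0, k.-primitive_root z.
  move=> k_gt0; apply: closed_field_prim_root => //.
  by move/pcharf0P: ch0 => ->; rewrite -lt0n.
have [z prim_z] := prim_root (((q ^ n).-1 * p ^ h.-1)`_ell^')%N (part_gt0 _ _).
have [w prim_w] := prim_root (ell ^ logn ell (q ^ n).-1)%N (pfactor_gt0 _ _).
(* Galois equivariance is associativity of composition. *)
rewrite /m subn1; split=> //; split.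
  exact: (reduction_surjective Hv p_pr p_vpow1 h_gt0 ell_pr ell_neq_p
    card_pred Ug g_gen Hred ch1 prim_z).
exact: (reduction_fiber Hv p_pr p_vpow1 h_gt0 ell_pr ell_neq_p
  card_pred Ug g_order g_gen Hred ch1 prim_z prim_w).
Qed.
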